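(* Let $G=(V,E)$ be an undirected graph and $\tau$ a positive integer. The polytope $$P_1^\tau(G)=\{x\in\mathbb{R}^{E^+\cup E^-}: x_{e^+}\ge1,\ x_{e^-}\ge1,\ x_{e^+}+x_{e^-}=\tau\ \forall e\in E,\ x(\delta^+_{\vec G}(U))\ge\tau\ \forall\,\emptyset\neq U\subsetneq V\}$$ is integral (every vertex is an integral vector).
   Context: Graphs are finite and loopless; parallel edges allowed. $\vec G=(V,E^+\cup E^-)$ is obtained from $G$ by replacing each edge $e=\{u,v\}$ by arcs $e^+=(u,v)$ and $e^-=(v,u)$ (choice arbitrary); $\delta^+_{\vec G}(U)$ is the set of arcs leaving $U$ and $x(B)=\sum_{e\in B}x_e$. *)

From mathcomp Require Import all_boot all_order all_algebra.
From mathcomp Require Import reals.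
Set Implicit Arguments. Unset Strict Implicit. Unset Printing Implicit Defensive.
Import Order.TTheory GRing.Theory Num.Theory.
Local Open Scope ring_scope.

(* The arc set
   E^+ \cup E^- of the bidirected graph is encoded as [E * bool]:
   (e, true) = e^+ = (u, v) and (e, false) = e^- = (v, u). *)

Definition arc_tail (V E : finType) (ends : E -> V * V) (a : E * bool) : V :=
  if a.2 then (ends a.1).1 else (ends a.1).2.
Definition arc_head (V E : finType) (ends : E -> V * V) (a : E * bool) : V :=
  if a.2 then (ends a.1).2 else (ends a.1).1.

Definition out_cut (R : realType) (V E : finType) (ends : E -> V * V)
  (x : E * bool -> R) (U : {set V}) : R :=
  \sum_(a : E * bool | (arc_tail ends a \in U) && (arc_head ends a \notin U)) x a.

Definition in_P1tau (R : realType) (V E : finType) (ends : E -> V * V)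
  (tau : nat) (x : E * bool -> R) : Prop :=
  (forall e : E, 1 <= x (e, true) /\ 1 <= x (e, false)
                 /\ x (e, true) + x (e, false) = tau%:R) /\
  (forall U : {set V}, U != set0 -> U != setT -> tau%:R <= out_cut ends x U).

Definition is_vertex (R : realType) (T : Type) (P : (T -> R) -> Prop)
  (x : T -> R) : Prop :=
  P x /\ forall (y z : T -> R) (l : R), P y -> P z -> 0 < l -> l < 1 ->
    x = (fun t => l * y t + (1 - l) * z t) -> y = z.

Definition integral_vector (R : realType) (T : Type) (x : T -> R) : Prop :=
  forall t, x t \is a Num.int.

(* Put y e := x (e, true), so that x (e, false) = tau - y e and the value of the
   cut delta^+(U) is netflow y U plus tau times the number of edges entering U,
   where netflow c U := \sum_e ([tail e \in U] - [head e \in U]) * c e is modular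
   in U.  Hence tight cuts are closed under uncrossing, and on every tight cut
   netflow is an integral combination of its values on a maximal cross-free
   family L of tight cuts.  Complementing the members of L that contain a fixed
   vertex makes L laminar without changing its atoms, and peeling off minimal
   members shows that netflow y' U, for y' the restriction of y to the set F of
   fractional edges, is integral on every atom U.  An atom separating exactly one
   edge of F would make that edge integral; so the atoms separating edges of F
   number at most |F|, and as each edge of F leaves as many of them as it enters,
   some nonzero d supported on F has netflow d = 0 on all atoms, hence on all
   tight cuts.  Then x +- eps d stays in the polytope for small eps, contradicting
   extremality unless F is empty. *)

From mathcomp Require Import all_boot all_order all_algebra.
From mathcomp Require Import reals ring lra.
Import Order.TTheory GRing.Theory Num.Theory.
Set Implicit Arguments. Unset Strict Implicit. Unset Printing Implicit Defensive.
Local Open Scope ring_scope.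

Section Crossing.
Variable V : finType.
Implicit Types (L M S X Y : {set V}) (MM : {set {set V}}).

Definition crossing X Y :=
  [&& X :&: Y != set0, X :\: Y != set0, Y :\: X != set0 & ~: (X :|: Y) != set0].

Lemma crossing_witness X Y u1 u2 u3 u4 :
  u1 \in X :&: Y -> u2 \in X :\: Y -> u3 \in Y :\: X -> u4 \in ~: (X :|: Y) ->
  crossing X Y.
Proof. by move=> *; apply/and4P; split; apply/set0Pn; eexists; eassumption. Qed.

Lemma crossingC X Y : crossing X Y = crossing Y X.
Proof. by rewrite /crossing setIC setUC; congr (_ && _); apply: andbCA. Qed.

Lemma crossingCr X Y : crossing X (~: Y) = crossing X Y.
Proof.
rewrite /crossing -setDE.
have -> : X :\: ~: Y = X :&: Y by rewrite setDE setCK.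
have -> : ~: Y :\: X = ~: (X :|: Y) by rewrite setDE setCU setIC.
have -> : ~: (X :|: ~: Y) = Y :\: X by rewrite setCU setCK setIC setDE.
by do 4!case: (_ != set0).
Qed.

Lemma crossingCl X Y : crossing (~: X) Y = crossing X Y.
Proof. by rewrite crossingC crossingCr crossingC. Qed.

Lemma crossingxx X : ~~ crossing X X.
Proof. by rewrite /crossing setDv eqxx andbF. Qed.

Lemma crossing_setIl S L : ~~ crossing (S :&: L) L.
Proof. by rewrite /crossing setDIl setDv setI0 eqxx andbF. Qed.

Lemma crossing_setUl S L : ~~ crossing (S :|: L) L.
Proof. by rewrite /crossing setDUr setDv setI0 eqxx !andbF. Qed.

Lemma crossing_from_setI S L M :
  crossing S L -> ~~ crossing L M -> crossing (S :&: L) M -> crossing S M.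
Proof.
case/and4P=> _ _ _ /set0Pn[a]; rewrite !inE negb_or => /andP[aS aL] nLM.
case/and4P=> /set0Pn[b1 +] /set0Pn[b2 +] /set0Pn[b3 +] /set0Pn[b4 +].
rewrite !inE ?negb_or => /andP[/andP[b1S b1L] b1M] /andP[b2M /andP[b2S b2L]].
move=> /andP[b3SL b3M] /andP[b4SL b4M].
have LM u3 u4 : u3 \in M :\: L -> u4 \in ~: (L :|: M) -> False.
  move=> u3M u4LM; case/negP: nLM.
  apply: (crossing_witness (u1 := b1) (u2 := b2) _ _ u3M u4LM).
    by rewrite inE b1L b1M.
  by rewrite inE b2L b2M.
have [u3 u3MS] : exists u3, u3 \in M :\: S.
  have [b3S|] := boolP (b3 \in S); last by exists b3; rewrite inE b3M andbT.
  have [aM|aM] := boolP (a \in M); first by exists a; rewrite inE aM aS.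
  have b3L : b3 \notin L by move: b3SL; rewrite b3S.
  by case: (LM b3 a); rewrite !inE ?negb_or ?b3M ?b3L ?aL ?aM.
have [u4 u4SM] : exists u4, u4 \in ~: (S :|: M).
  have [b4S|] := boolP (b4 \in S); last by exists b4; rewrite !inE negb_or b4M andbT.
  have [aM|aM] := boolP (a \in M); last by exists a; rewrite !inE negb_or aS aM.
  have b4L : b4 \notin L by move: b4SL; rewrite b4S.
  by case: (LM a b4); rewrite !inE ?negb_or ?b4M ?b4L ?aL ?aM.
apply: (crossing_witness (u1 := b1) (u2 := b2) _ _ u3MS u4SM).
  by rewrite inE b1S b1M.
by rewrite inE b2S b2M.
Qed.

Lemma crossing_from_setU S L M :
  crossing S L -> ~~ crossing L M -> crossing (S :|: L) M -> crossing S M.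
Proof.
move=> SL nLM SLM; rewrite -crossingCl; apply: (@crossing_from_setI _ (~: L)).
- by rewrite crossingCl crossingCr.
- by rewrite crossingCl.
- by rewrite -setCU crossingCl.
Qed.

Definition laminar X Y := [|| X :&: Y == set0, X \subset Y | Y \subset X].

Definition flip (r : V) X := if r \in X then ~: X else X.

Lemma laminar_flip r L M : ~~ crossing L M -> laminar (flip r L) (flip r M).
Proof.
have flipN X : r \notin flip r X by rewrite /flip; case: ifP => rX; rewrite ?inE rX.
have -> : crossing L M = crossing (flip r L) (flip r M).
  by rewrite /flip; do 2!case: ifP; rewrite ?crossingCl ?crossingCr.
have outside : ~: (flip r L :|: flip r M) != set0.
  by apply/set0Pn; exists r; rewrite !inE negb_or !flipN.
by rewrite /crossing /laminar -!setD_eq0 outside andbT !negb_and !negbK.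
Qed.

Definition atom (MM : {set {set V}}) a :=
  [set v | [forall L in MM, (v \in L) == (a \in L)]].

Lemma atom_refl MM a : a \in atom MM a.
Proof. by rewrite inE; apply/forall_inP. Qed.

Lemma atom_eq MM a v : v \in atom MM a -> atom MM v = atom MM a.
Proof.
rewrite inE => /forall_inP va; apply/setP => w; rewrite !inE.
by apply: eq_forallb_in => L /va /eqP ->.
Qed.

Lemma atom_sub MM L a : L \in MM -> a \in L -> atom MM a \subset L.
Proof.
move=> LM aL; apply/subsetP => v; rewrite inE => /forall_inP/(_ L LM).
by rewrite aL => /eqP.
Qed.

Lemma atom_flip r MM a : atom [set flip r L | L in MM] a = atom MM a.
Proof.
apply/setP => v; rewrite !inE.
apply/forall_inP/forall_inP => [va L LM | va _ /imsetP[L LM ->]];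
  [have := va _ (imset_f _ LM) | have := va L LM];
  by rewrite /flip; case: ifP; rewrite // !inE => _; case: (v \in L); case: (a \in L).
Qed.

Lemma laminar_min_sub MM L0 L : {in MM &, forall X Y, laminar X Y} ->
  {in MM, forall X, #|L0| <= #|X|}%N -> L0 \in MM -> L \in MM ->
  (L0 :&: L == set0) || (L0 \subset L).
Proof.
move=> lamMM minL0 L0M LM.
case/or3P: (lamMM _ _ L0M LM) => [-> | -> | LL0]; rewrite ?orbT //.
have /eqP -> : L == L0 by rewrite eqEcard LL0 minL0.
by rewrite subxx orbT.
Qed.

Lemma atom_setD1 MM L0 a : L0 \in MM -> a \notin L0 -> atom MM a = atom (MM :\ L0) a :\: L0.
Proof.
move=> L0M aL0; apply/setP => v; rewrite !inE.
apply/forall_inP/andP => [va | [vL0 /forall_inP va] L LM].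
  split; first by have := va _ L0M; rewrite (negbTE aL0) => /eqP ->.
  by apply/forall_inP => L /setD1P[_ /va].
have [-> | LL0] := eqVneq L L0; first by rewrite (negbTE vL0) (negbTE aL0).
by apply: va; apply/setD1P.
Qed.

Lemma atom_meet_sub MM L0 a : {in MM, forall L, (L0 :&: L == set0) || (L0 \subset L)} ->
  L0 :&: atom MM a != set0 -> L0 \subset atom MM a.
Proof.
move=> L0sep /set0Pn[b]; rewrite !inE => /andP[bL0 /forall_inP ba].
apply/subsetP => u uL0; rewrite inE; apply/forall_inP => L LM; rewrite -(eqP (ba L LM)).
case/orP: (L0sep L LM) => [/eqP L0L | /subsetP L0L]; last by rewrite !L0L.
by have /setP Lu := L0L; move: (Lu u) (Lu b); rewrite !inE uL0 bL0 /= => -> ->.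
Qed.

End Crossing.

Section MaxCrossFree.
Variables (V : finType) (T : {set {set V}}).
Implicit Types MM : {set {set V}}.

Definition crossfree (MM : {set {set V}}) :=
  [forall S in MM, forall L in MM, ~~ crossing S L].

Definition max_crossfree :=
  [arg max_(MM > set0 | (MM \subset T) && crossfree MM) #|MM|].

Lemma max_crossfreeP : (max_crossfree \subset T) && crossfree max_crossfree /\
  forall MM, (MM \subset T) && crossfree MM -> (#|MM| <= #|max_crossfree|)%N.
Proof.
rewrite /max_crossfree; case: arg_maxnP => [|MM MMP MMmax]; last by [].
by rewrite sub0set; apply/forall_inP => S; rewrite inE.
Qed.

Lemma max_crossfree_sub : max_crossfree \subset T.
Proof. by case: max_crossfreeP => /andP[]. Qed.

Lemma max_crossfree_free : {in max_crossfree &, forall S L, ~~ crossing S L}.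
Proof. by case: max_crossfreeP => /andP[_ /forall_inP free] _ S L /free/forall_inP; apply. Qed.

Lemma max_crossfree_max S :
  S \in T -> {in max_crossfree, forall L, ~~ crossing S L} -> S \in max_crossfree.
Proof.
move=> ST nS; apply/negPn/negP => SnM; case: max_crossfreeP => _ maxM.
have /maxM : (S |: max_crossfree \subset T) && crossfree (S |: max_crossfree).
  rewrite subUset sub1set ST max_crossfree_sub; apply/forall_inP => X /setU1P XM.
  apply/forall_inP => Y /setU1P YM.
  case: XM YM => [-> | XM] [-> | YM]; rewrite ?crossingxx ?nS //.
    by rewrite crossingC nS.
  exact: max_crossfree_free.
by rewrite cardsU1 SnM ltnn.
Qed.

End MaxCrossFree.

Section Modular.
Variables (V : finType) (Z : zmodType) (f : {set V} -> Z).
Hypothesis f_modular : forall X Y, f X + f Y = f (X :&: Y) + f (X :|: Y).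
Variable G : {pred Z}.
Hypothesis G_sub : {in G &, forall a b, a - b \in G}.
Implicit Types (L S X Y : {set V}) (MM : {set {set V}}).

Lemma uncrossing_mem (T : {set {set V}}) :
  {in T &, forall U W, crossing U W -> (U :&: W \in T) && (U :|: W \in T)} ->
  {in max_crossfree T, forall L, f L \in G} -> {in T, forall S, f S \in G}.
Proof.
move=> T_uncross GL S; have [k] := ubnP #|[set L in max_crossfree T | crossing S L]|.
elim: k S => // k IH S; rewrite ltnS => cS ST.
have [/exists_inP[L LM SL] | ] := boolP [exists L in max_crossfree T, crossing S L]; last first.
  by rewrite negb_exists_in => /forall_inP nS; apply/GL/max_crossfree_max.
have LT := subsetP (max_crossfree_sub T) L LM.
have /andP[SLT SULT] := T_uncross S L ST LT SL.
have fewer X : X \in T -> {in max_crossfree T, forall M, crossing X M -> crossing S M} ->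
    ~~ crossing X L -> f X \in G.
  move=> XT XS nXL; apply: IH XT; apply: leq_trans cS; apply: proper_card.
  rewrite properE; apply/andP; split.
    by apply/subsetP => M; rewrite !inE => /andP[MM /(XS M MM) ->]; rewrite MM.
  by apply/subsetP => /(_ L); rewrite !inE LM SL (negbTE nXL) => /(_ isT).
have -> : f S = f (S :&: L) - (f L - f (S :|: L)) by rewrite opprB addrA -f_modular addrK.
apply: G_sub; last apply: G_sub; [| exact: GL |].
  apply: (fewer _ SLT _ (crossing_setIl S L)) => M MM.
  exact: (crossing_from_setI SL (max_crossfree_free LM MM)).
apply: (fewer _ SULT _ (crossing_setUl S L)) => M MM.
exact: (crossing_from_setU SL (max_crossfree_free LM MM)).
Qed.

Hypothesis f0 : f set0 = 0.
Hypothesis G_setT : f setT \in G.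

Lemma modular_disjU X Y : X :&: Y = set0 -> f (X :|: Y) = f X + f Y.
Proof. by move=> XY0; rewrite f_modular XY0 f0 add0r. Qed.

Lemma modular_setD X Y : Y \subset X -> f (X :\: Y) = f X - f Y.
Proof.
move=> YX; rewrite -{2}(setID X Y) (setIidPr YX) modular_disjU; first by rewrite addrC addKr.
by rewrite setIDA setDIl setDv set0I.
Qed.

Lemma laminar_atom_mem MM a : {in MM &, forall X Y, laminar X Y} ->
  {in MM, forall L, f L \in G} -> f (atom MM a) \in G.
Proof.
have [k] := ubnP #|MM|; elim: k MM a => // k IH MM a; rewrite ltnS => cMM lamMM GMM.
have [-> | [L1 L1M]] := set_0Vmem MM.
  rewrite (_ : atom set0 a = setT) //.
  by apply/setP => v; rewrite !inE; apply/forall_inP => L; rewrite inE.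
have [L0 L0M L0min] := arg_minnP (fun L => #|L|) L1M.
have L0sep := laminar_min_sub lamMM L0min L0M.
have [aL0 | aL0] := boolP (a \in L0).
  suff -> : atom MM a = L0 by apply: GMM.
  apply/eqP; rewrite eqEsubset atom_sub // atom_meet_sub //.
  by apply/set0Pn; exists a; rewrite inE aL0 atom_refl.
have MM'sub : MM :\ L0 \subset MM by apply: subD1set.
have IH' : f (atom (MM :\ L0) a) \in G.
  apply: IH; first exact: leq_trans (proper_card (properD1 L0M)) cMM.
    by move=> X Y /(subsetP MM'sub) XM /(subsetP MM'sub); apply: lamMM.
  by move=> L /(subsetP MM'sub); apply: GMM.
rewrite (atom_setD1 L0M aL0).
have [/eqP disj | meet] := boolP (L0 :&: atom (MM :\ L0) a == set0).
  by rewrite (setDidPl _) // disjoint_sym -setI_eq0 disj.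
have L0sub : L0 \subset atom (MM :\ L0) a.
  by apply: atom_meet_sub meet => L /(subsetP MM'sub); apply: L0sep.
by rewrite modular_setD //; apply: G_sub => //; apply: GMM.
Qed.

Lemma crossfree_atom_mem MM a : {in MM &, forall X Y, ~~ crossing X Y} ->
  {in MM, forall L, f L \in G} -> f (atom MM a) \in G.
Proof.
move=> freeMM GMM; rewrite -(atom_flip a); apply: laminar_atom_mem.
  by move=> _ _ /imsetP[X XM ->] /imsetP[Y YM ->]; apply/laminar_flip/freeMM.
move=> _ /imsetP[L LM ->]; rewrite /flip; case: ifP => _; last exact: GMM.
by rewrite -setTD modular_setD ?subsetT //; apply: G_sub => //; apply: GMM.
Qed.

Lemma atom_union_mem MM X : (forall a, f (atom MM a) \in G) ->
  {in X, forall a, atom MM a \subset X} -> f X \in G.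
Proof.
move=> Gatom; have G0 : 0 \in G by rewrite -(subrr (f setT)) G_sub.
have [k] := ubnP #|X|; elim: k X => // k IH X; rewrite ltnS => cX closedX.
have [-> | [a aX]] := set_0Vmem X; first by rewrite f0.
have AX := closedX a aX.
rewrite -(setID X (atom MM a)) (setIidPr AX) modular_disjU; last first.
  by rewrite setIDA setDIl setDv set0I.
rewrite -[f (X :\: _)]opprK -[- f _]sub0r; apply: G_sub => //; apply: G_sub => //.
apply: IH => [|b /setDP[bX bA]].
  apply: leq_trans cX; apply: (leq_ltn_trans _ (proper_card (properD1 aX))).
  by apply: subset_leq_card; apply: setDS; rewrite sub1set atom_refl.
apply/subsetP => v vb; rewrite inE (subsetP (closedX b bX)) // andbT.
by apply: contra bA => va; rewrite -(atom_eq va) (atom_eq vb) atom_refl.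
Qed.

End Modular.

Lemma left_kernel_nonzero (K : fieldType) m n (M : 'M[K]_(m, n)) :
  (0 < m)%N -> (n <= m)%N -> M *m (const_mx 1 : 'cV[K]_n) = 0 ->
  exists2 v : 'rV_m, v != 0 & v *m M = 0.
Proof.
move=> m_gt0 le_nm M1; have rkM : (\rank M < m)%N.
  have [n0 | n_gt0] := posnP n.
    by apply: leq_ltn_trans m_gt0; rewrite -n0 rank_leq_col.
  apply: leq_trans le_nm; have : ((const_mx 1 : 'cV[K]_n)^T <= kermx M^T)%MS.
    by apply/sub_kermxP; rewrite -trmx_mul M1 trmx0.
  have one_nz : (const_mx 1 : 'cV[K]_n)^T != 0.
    by apply/rV0Pn; exists (Ordinal n_gt0); rewrite !mxE oner_eq0.
  by move/mxrankS; rewrite mxrank_ker (mxrank_tr M) rank_rV one_nz subn_gt0.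
have : kermx M != 0 by rewrite -mxrank_eq0 mxrank_ker subn_eq0 -ltnNge.
by case/rowV0Pn => v /sub_kermxP vM v0; exists v.
Qed.

Section NetFlow.
Variables (R : fieldType) (V E : finType) (t h : E -> V).
Implicit Types (X Y A : {set V}) (c d : E -> R).

Definition cut_sign X e : R := (t e \in X)%:R - (h e \in X)%:R.

Definition netflow c X := \sum_e cut_sign X e * c e.

Definition separates X e := (t e \in X) != (h e \in X).

Lemma cut_sign_modular X Y e :
  cut_sign X e + cut_sign Y e = cut_sign (X :&: Y) e + cut_sign (X :|: Y) e.
Proof.
have ind v : (v \in X)%:R + (v \in Y)%:R = (v \in X :&: Y)%:R + (v \in X :|: Y)%:R :> R.
  by rewrite !inE; case: (v \in X); case: (v \in Y); rewrite /= ?addr0 ?add0r.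
by rewrite /cut_sign addrACA -opprD ind ind opprD addrACA.
Qed.

Lemma netflow_modular c X Y :
  netflow c X + netflow c Y = netflow c (X :&: Y) + netflow c (X :|: Y).
Proof.
by rewrite /netflow -!big_split; apply: eq_bigr => e _ /=; rewrite -!mulrDl cut_sign_modular.
Qed.

Lemma netflowD c d X : netflow (fun e => c e + d e) X = netflow c X + netflow d X.
Proof. by rewrite /netflow -big_split; apply: eq_bigr => e _; rewrite mulrDr. Qed.

Lemma netflow0 c : netflow c set0 = 0.
Proof. by rewrite /netflow big1 // => e _; rewrite /cut_sign !inE subrr mul0r. Qed.

Lemma netflowT c : netflow c setT = 0.
Proof. by rewrite /netflow big1 // => e _; rewrite /cut_sign !inE subrr mul0r. Qed.

Lemma cut_sign_eq0 X e : ~~ separates X e -> cut_sign X e = 0.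
Proof. by rewrite /separates /cut_sign negbK => /eqP ->; rewrite subrr. Qed.

Lemma cut_sign_sqr X e : separates X e -> cut_sign X e ^+ 2 = 1.
Proof.
rewrite /separates /cut_sign; case: (t e \in X); case: (h e \in X) => //= _.
  by rewrite subr0 expr1n.
by rewrite sub0r sqrrN expr1n.
Qed.

Section SeparatedAtoms.
Variables (MM : {set {set V}}) (F : {set E}).

Definition sep_atoms :=
  [set A in [set atom MM a | a in V] | [exists e in F, separates A e]].

Lemma sep_atoms_atom A v : A \in sep_atoms -> v \in A -> A = atom MM v.
Proof. by rewrite !inE => /andP[/imsetP[a _ ->] _] /atom_eq ->. Qed.

Lemma card_sep_atoms :
  {in sep_atoms, forall A, #|[set e in F | separates A e]| != 1%N} ->
  (#|sep_atoms| <= #|F|)%N.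
Proof.
(* Double counting of the pairs (A, e) such that A separates e: every atom of
   sep_atoms separates at least two edges of F, every edge at most two atoms. *)
move=> not1.
have cardE (I : finType) (B : {set I}) (P : pred I) :
    #|[set i in B | P i]| = (\sum_(i in B) P i)%N.
  rewrite -sum1dep_card big_mkcond [RHS]big_mkcond; apply: eq_bigr => i _.
  by case: (i \in B); case: (P i).
have lower : (#|sep_atoms| * 2 <= \sum_(A in sep_atoms) #|[set e in F | separates A e]|)%N.
  rewrite -sum1_card big_distrl /=; apply: leq_sum => A SA; rewrite mul1n.
  have : (0 < #|[set e in F | separates A e]|)%N.
    move: SA; rewrite !inE => /andP[_ /exists_inP[e eF sepA]].
    by rewrite card_gt0; apply/set0Pn; exists e; rewrite inE eF sepA.
  by move: (not1 A SA); case: #|_| => [|[|]].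
have upper : (\sum_(A in sep_atoms) #|[set e in F | separates A e]| <= #|F| * 2)%N.
  under eq_bigr do rewrite cardE.
  rewrite exchange_big -sum1_card big_distrl /=; apply: leq_sum => e eF; rewrite mul1n -cardE.
  have sep_ends :
      [set A in sep_atoms | separates A e] \subset [set atom MM (t e); atom MM (h e)].
    apply/subsetP => A; rewrite inE => /andP[SA]; rewrite /separates !inE.
    case tA: (t e \in A); case hA: (h e \in A) => //= _.
      by rewrite -(sep_atoms_atom SA tA) eqxx.
    by rewrite -(sep_atoms_atom SA hA) eqxx orbT.
  by apply: leq_trans (subset_leq_card sep_ends) _; rewrite cards2; case: (_ != _).
by rewrite -(leq_pmul2r (isT : (0 < 2)%N)); apply: leq_trans lower upper.
Qed.

Lemma sum_sep_atoms_mem v :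
  \sum_(A in sep_atoms) ((v \in A)%:R : R) = (atom MM v \in sep_atoms)%:R.
Proof.
rewrite (eq_bigr (fun A => (A == atom MM v)%:R)) => [|A SA]; last first.
  suff -> : (v \in A) = (A == atom MM v) by [].
  by apply/idP/eqP => [/(sep_atoms_atom SA) | ->]; last exact: atom_refl.
have [Sv | nSv] := boolP (atom MM v \in sep_atoms); last first.
  by rewrite big1 // => A SA; case: eqP SA nSv => // -> ->.
by rewrite (bigD1 (atom MM v)) //= eqxx big1 ?addr0 // => A /andP[_ /negbTE->].
Qed.

Lemma sum_cut_sign_sep_atoms e : e \in F -> \sum_(A in sep_atoms) cut_sign A e = 0.
Proof.
move=> eF; rewrite sumrB !sum_sep_atoms_mem; apply/eqP; rewrite subr_eq0; apply/eqP.
have [-> // | ne] := eqVneq (atom MM (t e)) (atom MM (h e)).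
have ht : h e \notin atom MM (t e) by apply: contra ne => /atom_eq ->.
have th : t e \notin atom MM (h e) by apply: contra ne => /atom_eq <-.
have sep_t : [exists e' in F, separates (atom MM (t e)) e'].
  by apply/exists_inP; exists e; rewrite // /separates (negbTE ht) atom_refl.
have sep_h : [exists e' in F, separates (atom MM (h e)) e'].
  by apply/exists_inP; exists e; rewrite // /separates (negbTE th) atom_refl.
by rewrite !inE !imset_f // sep_t sep_h.
Qed.

Lemma netflow_atom_kernel e0 : e0 \in F ->
  {in sep_atoms, forall A, #|[set e in F | separates A e]| != 1%N} ->
  exists d : E -> R, [/\ exists e, d e != 0, forall e, e \notin F -> d e = 0
    & forall a, netflow d (atom MM a) = 0].
Proof.
move=> e0F not1.
pose M := \matrix_(i < #|F|, j < #|sep_atoms|) cut_sign (enum_val j) (enum_val i).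
have M1 : M *m (const_mx 1 : 'cV[R]_#|sep_atoms|) = 0.
  apply/matrixP => i k; rewrite !mxE -[RHS](sum_cut_sign_sep_atoms (enum_valP i)).
  by rewrite [RHS]big_enum_val; apply: eq_bigr => j _; rewrite !mxE mulr1.
have F_gt0 : (0 < #|F|)%N by rewrite card_gt0; apply/set0Pn; exists e0.
have [v /rV0Pn[i vi] vM] := left_kernel_nonzero F_gt0 (card_sep_atoms not1) M1.
pose d e := if e \in F then v 0 (enum_rank_in e0F e) else 0.
exists d; split => [|e /negbTE eF|a]; last 2 first.
- by rewrite /d eF.
- rewrite /netflow (bigID (mem F)) /= [X in _ + X]big1 ?addr0 => [|e /negbTE eF]; last first.
    by rewrite /d eF mulr0.
  have [Sa | nSa] := boolP (atom MM a \in sep_atoms); last first.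
    apply: big1 => e eF; rewrite cut_sign_eq0 ?mul0r //; apply: contra nSa => sep.
    by rewrite !inE imset_f //=; apply/exists_inP; exists e.
  transitivity ((v *m M) 0 (enum_rank_in Sa (atom MM a))); last by rewrite vM mxE.
  rewrite mxE [LHS]big_enum_val; apply: eq_bigr => j _.
  by rewrite /d enum_valP enum_valK_in /M !mxE enum_rankK_in // mulrC.
by exists (enum_val i); rewrite /d enum_valP enum_valK_in.
Qed.

End SeparatedAtoms.
End NetFlow.

Lemma small_perturbation (R : realFieldType) (I : finType) (a b : I -> R) :
  (forall i, 0 <= a i) -> (forall i, a i = 0 -> b i = 0) ->
  exists2 eps, 0 < eps & forall s i, `|s| <= eps -> 0 <= a i + s * b i.
Proof.
move=> a_ge0 ab0; pose q i := a i / (1 + `|b i|).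
have den_gt0 i : 0 < 1 + `|b i| by have := normr_ge0 (b i); lra.
exists (\big[Order.min/1]_(i | 0 < a i) q i).
  by apply: lt_bigmin => [|i ai]; [exact: ltr01 | rewrite divr_gt0].
move=> s i s_le; have [/eqP ai0 | ai_gt0] := boolP (a i == 0).
  by rewrite ai0 ab0 // mulr0 addr0.
have {}ai_gt0 : 0 < a i by rewrite lt_neqAle eq_sym ai_gt0 a_ge0.
have s_q : `|s| <= q i by apply: le_trans s_le _; exact: bigmin_le_cond.
have qE : q i * (1 + `|b i|) = a i by rewrite divfK ?gt_eqF.
have : `|s * b i| <= a i by rewrite normrM -qE; have := normr_ge0 (b i); nra.
by case/ler_normlP; lra.
Qed.

Lemma vertex_dir_eq0 (R : realType) (T : Type) (P : (T -> R) -> Prop) x D eps :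
  is_vertex P x -> 0 < eps -> (forall s, `|s| <= eps -> P (fun t => x t + s * D t)) ->
  forall t, D t = 0.
Proof.
move=> [_ x_ext] eps_gt0 PD t.
have half_gt0 : (0 : R) < 2^-1 by rewrite invr_gt0 ltr0n.
have half_lt1 : (2^-1 : R) < 1 by rewrite invf_lt1 ?ltr0n ?ltr1n.
have x_mid : x = (fun t => 2^-1 * (x t + eps * D t) + (1 - 2^-1) * (x t + - eps * D t)).
  by apply: boolp.funext => u; field.
have eps_le : `|eps| <= eps by rewrite gtr0_norm.
have neps_le : `|- eps| <= eps by rewrite normrN.
have := x_ext _ _ _ (PD _ eps_le) (PD _ neps_le) half_gt0 half_lt1 x_mid.
move=> /(congr1 (fun y => y t)) /= Dt; have /eqP : eps * D t = 0 by lra.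
by rewrite mulf_eq0 gt_eqF //= => /eqP.
Qed.

Section Cuts.
Variables (R : realType) (V E : finType) (ends : E -> V * V).
Local Notation tl := (fun e : E => (ends e).1).
Local Notation hd := (fun e : E => (ends e).2).
Implicit Types (z w : E * bool -> R) (U W : {set V}).

Lemma out_cut_netflow z U :
  out_cut ends z U = netflow tl hd (fun e => z (e, true)) U +
    \sum_e ((hd e \in U) && (tl e \notin U))%:R * (z (e, true) + z (e, false)).
Proof.
have sum_pair (g : E * bool -> R) : \sum_a g a = \sum_e (g (e, true) + g (e, false)).
  rewrite (eq_bigr (fun p => g (p.1, p.2))) => [|[] //].
  by rewrite -(pair_bigA _ (fun e b => g (e, b))); apply: eq_bigr => e _; rewrite big_bool.
rewrite /out_cut big_mkcond sum_pair /netflow -big_split; apply: eq_bigr => e _.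
rewrite /arc_tail /arc_head /cut_sign /=.
by case: ((ends e).1 \in U); case: ((ends e).2 \in U); rewrite /= ?mulr1n ?mulr0n; lra.
Qed.

Lemma out_cut_lin z w s U :
  out_cut ends (fun a => z a + s * w a) U = out_cut ends z U + s * out_cut ends w U.
Proof. by rewrite /out_cut big_split /= mulr_sumr. Qed.

Lemma out_cut_submod z U W : (forall a, 0 <= z a) ->
  out_cut ends z (U :&: W) + out_cut ends z (U :|: W) <= out_cut ends z U + out_cut ends z W.
Proof.
move=> z_ge0; rewrite /out_cut !(big_mkcond (fun a => _ && _)) -!big_split /=.
apply: ler_sum => a _; have := z_ge0 a; rewrite !inE.
by case: (arc_tail ends a \in U); case: (arc_tail ends a \in W);
  case: (arc_head ends a \in U); case: (arc_head ends a \in W) => /= ?; lra.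
Qed.

End Cuts.

Section P1tau.
Variables (R : realType) (V E : finType) (ends : E -> V * V) (tau : nat).
Local Notation tl := (fun e : E => (ends e).1).
Local Notation hd := (fun e : E => (ends e).2).
Local Notation flow := (netflow tl hd).

Definition tight_cuts (x : E * bool -> R) :=
  [set U | [&& U != set0, U != setT & out_cut ends x U == tau%:R]].

Lemma in_P1tau_perturb x D : in_P1tau ends tau x ->
  (forall e, D (e, true) + D (e, false) = 0) -> (forall a, x a = 1 -> D a = 0) ->
  {in tight_cuts x, forall U, out_cut ends D U = 0} ->
  exists2 eps, 0 < eps &
    forall s, `|s| <= eps -> in_P1tau ends tau (fun a => x a + s * D a).
Proof.
case=> x_edge x_cut D0 D1 Dtight; pose proper (U : {set V}) := (U != set0) && (U != setT).
pose a (i : (E * bool) + {set V}) := match i with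
  | inl p => x p - 1 | inr U => if proper U then out_cut ends x U - tau%:R else 0 end.
pose b (i : (E * bool) + {set V}) := match i with
  | inl p => D p | inr U => if proper U then out_cut ends D U else 0 end.
have [[[e []] | U] | [[e []] | U] /= | eps eps_gt0 ab] := @small_perturbation R _ a b.
- by case: (x_edge e) => ? []; rewrite /= subr_ge0.
- by case: (x_edge e) => _ []; rewrite /= subr_ge0.
- by rewrite /=; case: ifP => // /andP[U0 UT]; rewrite subr_ge0 x_cut.
- by move=> xe; apply: D1; lra.
- by move=> xe; apply: D1; lra.
- case: ifP => // /andP[U0 UT] cutU; apply: Dtight.
  by rewrite inE U0 UT -subr_eq0 cutU eqxx.
exists eps => // s s_le; split => [e | U U0 UT].
  have sD : s * D (e, true) + s * D (e, false) = 0 by rewrite -mulrDr D0 mulr0.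
  have := ab s (inl (e, true)) s_le; have := ab s (inl (e, false)) s_le.
  by case: (x_edge e) => _ [_ xe] /=; lra.
by have := ab s (inr U) s_le; rewrite /= /proper U0 UT out_cut_lin /=; lra.
Qed.

Section Vertex.
Variable x : E * bool -> R.
Hypothesis xP : in_P1tau ends tau x.

Lemma x_false e : x (e, false) = tau%:R - x (e, true).
Proof. by case: xP => /(_ e)[_ []] _ xe _; lra. Qed.

Lemma tight_cuts_uncross : {in tight_cuts x &, forall U W,
  crossing U W -> (U :&: W \in tight_cuts x) && (U :|: W \in tight_cuts x)}.
Proof.
move=> U W; rewrite !inE => /and3P[_ _ /eqP cutU] /and3P[_ _ /eqP cutW].
case/and4P=> /set0Pn[v1 v1UW] _ /set0Pn[v3 v3WU] /set0Pn[v4 v4UW].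
have I0 : U :&: W != set0 by apply/set0Pn; exists v1.
have IT : U :&: W != setT.
  by apply: contraTneq v3WU => /setP/(_ v3); rewrite !inE => /andP[-> _].
have U0' : U :|: W != set0 by apply/set0Pn; exists v1; move: v1UW; rewrite !inE => /andP[->].
have UT' : U :|: W != setT by apply: contraTneq v4UW => ->; rewrite !inE.
case: xP => x_edge x_cut; have := x_cut _ I0 IT; have := x_cut _ U0' UT'.
have x_ge0 a : 0 <= x a by case: a => e []; case: (x_edge e) => ? [] ? _; lra.
have := out_cut_submod ends U W x_ge0.
by rewrite I0 IT U0' UT' /= => *; apply/andP; split; apply/eqP; lra.
Qed.

Definition frac := [set e | x (e, true) \isn't a Num.int].

Definition xfrac e := if e \in frac then x (e, true) else 0.

Local Notation tight_family := (max_crossfree (tight_cuts x)).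

Lemma netflow_xfrac_tight : {in tight_cuts x, forall U, flow xfrac U \is a Num.int}.
Proof.
move=> U; rewrite inE => /and3P[_ _ /eqP]; rewrite out_cut_netflow.
have -> : (fun e => x (e, true)) = (fun e => xfrac e + (x (e, true) - xfrac e)).
  by apply: boolp.funext => e; rewrite addrC subrK.
rewrite netflowD -addrA => /eqP; rewrite eq_sym -subr_eq => /eqP <-.
rewrite rpredB ?rpredD ?natr_int //; apply: rpred_sum => e _.
  apply: rpredM; first by rewrite /cut_sign rpredB ?natr_int.
  by rewrite /xfrac inE; case: ifP => [_ | /negbFE]; rewrite ?subrr ?rpred0 ?subr0.
by rewrite x_false addrC subrK rpredM ?natr_int.
Qed.

Lemma netflow_xfrac_atom a : flow xfrac (atom tight_family a) \is a Num.int.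
Proof.
apply: (crossfree_atom_mem (G := [pred z : R | z \is a Num.int]) (netflow_modular _ _ xfrac)).
- by move=> u v uZ vZ; apply: rpredB.
- exact: netflow0.
- by rewrite inE netflowT rpred0.
- exact: max_crossfree_free.
by move=> L /(subsetP (max_crossfree_sub _)); apply: netflow_xfrac_tight.
Qed.

Lemma xfrac_sep_atoms : {in sep_atoms tl hd tight_family frac,
  forall A, #|[set e in frac | separates tl hd A e]| != 1%N}.
Proof.
move=> A; rewrite inE => /andP[/imsetP[a _ ->] _]; apply/cards1P => -[e0 sepE].
have /setIdP[e0F sep0] : e0 \in [set e in frac | separates tl hd (atom tight_family a) e].
  by rewrite sepE set11.
have := netflow_xfrac_atom a.
rewrite /netflow (bigD1 e0) //= big1 ?addr0 => [ | e ne0]; last first.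
  rewrite /xfrac; case: ifP => eF; last by rewrite mulr0.
  rewrite cut_sign_eq0 ?mul0r //; apply: contra ne0 => sep.
  by rewrite -in_set1 -sepE inE eF.
have cZ : cut_sign R tl hd (atom tight_family a) e0 \is a Num.int.
  by rewrite rpredB ?natr_int.
move/(rpredM cZ); rewrite mulrA -expr2 cut_sign_sqr // mul1r /xfrac e0F.
by move: e0F; rewrite inE => /negP.
Qed.

Lemma frac_direction e0 : e0 \in frac -> exists d : E -> R,
  [/\ exists e, d e != 0, forall e, e \notin frac -> d e = 0
    & {in tight_cuts x, forall U, flow d U = 0}].
Proof.
move=> e0F; have [d [d_nz d_frac d_atom]] := netflow_atom_kernel R e0F xfrac_sep_atoms.
exists d; split => // U TU; apply/eqP.
have G_sub : {in [pred z : R | z == 0] &, forall u v, u - v \in [pred z : R | z == 0]}.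
  by move=> u v; rewrite !inE => /eqP-> /eqP->; rewrite subrr.
apply: (uncrossing_mem (netflow_modular _ _ d) G_sub tight_cuts_uncross _ TU) => L LT.
apply: (@atom_union_mem _ _ _ (netflow_modular _ _ d) _ G_sub (netflow0 _ _ d) _ tight_family).
- by rewrite inE netflowT.
- by move=> a; rewrite inE d_atom.
by move=> a; apply: atom_sub.
Qed.

Lemma vertex_head_int : is_vertex (in_P1tau ends tau) x -> forall e, x (e, true) \is a Num.int.
Proof.
move=> xV e; apply/negPn/negP => eZ; have eF : e \in frac by rewrite inE.
have [d [[e1 de1] d_frac d_tight]] := frac_direction eF.
pose D a := if a.2 then d a.1 else - d a.1.
have D0 e' : D (e', true) + D (e', false) = 0 by rewrite /D subrr.
have D1 a : x a = 1 -> D a = 0.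
  case: a => e' b xa; suff fe : e' \notin frac by case: b xa => _; rewrite /D /= d_frac ?oppr0.
  rewrite inE negbK; case: b xa => [-> | xa]; first exact: rpred1.
  have -> : x (e', true) = tau%:R - 1 by move: (x_false e'); lra.
  by rewrite rpredB ?natr_int ?rpred1.
have Dcut : {in tight_cuts x, forall U, out_cut ends D U = 0}.
  move=> U TU; rewrite out_cut_netflow big1 ?addr0 => [|e' _]; last by rewrite D0 mulr0.
  exact: d_tight.
have [eps eps_gt0 feas] := in_P1tau_perturb xP D0 D1 Dcut.
by have := vertex_dir_eq0 xV eps_gt0 feas (e1, true); apply/eqP.
Qed.
End Vertex.
End P1tau.

Theorem mainTheorem15 (R : realType) (V E : finType) (ends : E -> V * V)
  (loopless : forall e : E, (ends e).1 != (ends e).2)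
  (tau : nat) (tau_pos : (0 < tau)%N) :
  forall x : E * bool -> R,
    is_vertex (in_P1tau ends tau) x -> integral_vector x.
Proof.
move=> x xV [e b]; have xP := xV.1; have eZ := vertex_head_int xP xV e.
by case: b; rewrite ?(x_false xP) ?rpredB ?natr_int.
Qed.
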